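(* Let $V_-\in\mathbb C(x)$, $\lambda_1\in\mathbb C$, and let $\Psi_{\lambda_1}$ be a nonzero solution of $-\partial_x^2\Psi+V_-\Psi=\lambda_1\Psi$ with $W:=-\partial_x(\ln\Psi_{\lambda_1})$ algebraic over $\mathbb C(x)$; let $V_+=V_--2\partial_x^2(\ln\Psi_{\lambda_1})$ (so that $V_\mp-\lambda_1=W^2\mp\partial_xW$). Then the following are equivalent: (i) $W\in\mathbb C(x)$; (ii) $V_+\in\mathbb C(x)$ and, for every $\lambda\ne\lambda_1$, the Picard–Vessiot extensions over $\mathbb C(x)$ of $-\partial_x^2\Psi+V_-\Psi=\lambda\Psi$ and of $-\partial_x^2\Psi+V_+\Psi=\lambda\Psi$ coincide.
   Context: Condition (ii) is what the paper calls the Darboux transformation being strong iso-Galoisian: same base field and same Picard–Vessiot extensions. *)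

From HB Require Import structures.
From mathcomp Require Import all_boot all_order all_algebra.
From mathcomp Require Import reals complex.
Set Implicit Arguments. Unset Strict Implicit. Unset Printing Implicit Defensive.
Import Order.TTheory GRing.Theory Num.Theory.
Local Open Scope ring_scope.

Definition ratfun (C : idomainType) := {fraction {poly C}}.

Definition ratC (C : idomainType) (c : C) : ratfun C := FracField.tofrac (c%:P).
Definition ratX (C : idomainType) : ratfun C := FracField.tofrac 'X.

Section Diff.
Variables (C : idomainType) (K : fieldType).

Definition derivation (D : K -> K) : Prop :=
  (forall a b, D (a + b) = D a + D b) /\
  (forall a b, D (a * b) = D a * b + a * D b).

(* (K, D) together with iota is a differential field extension of
   (C(x), d/dx): iota is a field embedding compatible with the derivations.
   (A derivation of C(x) killing C and sending x to 1 is d/dx.) *)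
Definition diff_ext_of_ratfun (D : K -> K) (iota : ratfun C -> K) : Prop :=
  derivation D /\
  (forall c : C, D (iota (ratC c)) = 0) /\
  D (iota (ratX C)) = 1.

Definition constants_are_C (D : K -> K) (iota : ratfun C -> K) : Prop :=
  forall a : K, D a = 0 -> exists c : C, a = iota (ratC c).

Definition schrod_sol (D : K -> K) (V lam y : K) : Prop :=
  - D (D y) + V * y = lam * y.

Definition wronskian (D : K -> K) (y1 y2 : K) : K := y1 * D y2 - D y1 * y2.

Definition has_fundamental_system (D : K -> K) (V lam : K) : Prop :=
  exists y1 y2, schrod_sol D V lam y1 /\ schrod_sol D V lam y2 /\
                wronskian D y1 y2 != 0.

Definition is_subfield (S : K -> Prop) : Prop :=
  S 0 /\ S 1 /\ (forall a b, S a -> S b -> S (a - b)) /\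
  (forall a b, S a -> S b -> S (a * b)) /\ (forall a, S a -> S (a^-1)).

Definition gen_subfield (A : K -> Prop) (x : K) : Prop :=
  forall S, is_subfield S -> (forall a, A a -> S a) -> S x.

(* When K has constants C and contains a fundamental system,
   this is the Picard-Vessiot extension of the equation (realised in K). *)
Definition PV_field (D : K -> K) (iota : ratfun C -> K) (V lam : K) : K -> Prop :=
  gen_subfield (fun a => (exists f, a = iota f) \/
                         exists y, schrod_sol D V lam y /\ (a = y \/ a = D y)).

Definition algebraic_over_ratfun (iota : {rmorphism ratfun C -> K}) (a : K) : Prop :=
  exists p : {poly ratfun C}, p != 0 /\ (map_poly iota p).[a] = 0.

End Diff.

From HB Require Import structures.
From mathcomp Require Import all_boot all_order all_algebra.
From mathcomp Require Import reals complex.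
From mathcomp Require Import ring.
Import Order.TTheory GRing.Theory Num.Theory.
Local Open Scope ring_scope.
Set Implicit Arguments. Unset Strict Implicit.

(* With W = -Psi1'/Psi1 the two potentials factor as V_-/+ = lam1 + W^2 -/+ W'.
   If W is rational, the Darboux operator z |-> z' - W z maps solutions of the
   V_+ equation at lam to solutions of the V_- equation, and z' + W z maps them
   back up to the nonzero factor lam1 - lam; both operators have coefficients in
   C(x), so each Picard-Vessiot field contains the other.  Conversely, if V_+ is
   rational then so are W' = (V_+ - V_-)/2 and W^2 = V_- - lam1 + W', hence so is
   (W^2)' = 2 W W'; thus either W = (W^2)'/(2 W') is rational, or W' = 0 and W is
   a constant. *)

Section Derivation.
Variables (K : fieldType) (D : K -> K) (hD : derivation D).

Lemma derivationD a b : D (a + b) = D a + D b. Proof. exact: hD.1. Qed.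

Lemma derivationM a b : D (a * b) = D a * b + a * D b. Proof. exact: hD.2. Qed.

Lemma derivation0 : D 0 = 0.
Proof. by apply: (addrI (D 0)); rewrite -derivationD !addr0. Qed.

Lemma derivationN a : D (- a) = - D a.
Proof. by apply: (addrI (D a)); rewrite -derivationD !subrr derivation0. Qed.

Lemma derivationB a b : D (a - b) = D a - D b.
Proof. by rewrite derivationD derivationN. Qed.

Lemma derivation1 : D 1 = 0.
Proof.
by apply: (addrI (D 1)); rewrite addr0 -{3}[1]mulr1 derivationM mulr1 mul1r.
Qed.

Lemma derivationV a : a != 0 -> D a^-1 = - D a / (a * a).
Proof.
move=> a0; have := derivationM a a^-1; rewrite mulfV // derivation1 => /esym Da.
have -> : D a^-1 = (a * D a^-1) / a by field.
have -> : a * D a^-1 = - (D a / a) by rewrite -[LHS]subr0 -Da; ring.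
by field.
Qed.

Lemma derivation_mulc c a : D c = 0 -> D (c * a) = c * D a.
Proof. by move=> Dc; rewrite derivationM Dc mul0r add0r. Qed.

End Derivation.

Section Subfield.
Variables (K : fieldType) (S : K -> Prop) (hS : is_subfield S).

Lemma subfield0 : S 0. Proof. by case: hS. Qed.

Lemma subfieldB a b : S a -> S b -> S (a - b).
Proof. by case: hS => _ [_ [h _]]; apply: h. Qed.

Lemma subfieldM a b : S a -> S b -> S (a * b).
Proof. by case: hS => _ [_ [_ [h _]]]; apply: h. Qed.

Lemma subfieldV a : S a -> S a^-1.
Proof. by case: hS => _ [_ [_ [_ h]]]; apply: h. Qed.

Lemma subfieldD a b : S a -> S b -> S (a + b).
Proof.
move=> Sa Sb; rewrite -[b]opprK -[- b]sub0r.
by apply: subfieldB => //; apply: subfieldB => //; apply: subfield0.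
Qed.

End Subfield.

Lemma tofrac_quotient (R : idomainType) (f : {fraction R}) :
  exists p q, q != 0 /\ f = FracField.tofrac p / FracField.tofrac q.
Proof.
elim/quotW: f => x; exists x.1, x.2; split; first exact: denom_ratioP.
apply/(canRL (mulfK _)); first by rewrite tofrac_eq0 denom_ratioP.
unlock FracField.tofrac.
rewrite /= -[_ * _]/(FracField.mul _ _) -FracField.pi_mul.
apply/(@eqP (FracField.type R)).
change (FracField.mulf x (Ratio x.2 1) == Ratio x.1 1 %[mod FracField.type R])%qT.
rewrite FracField.equivf_def /FracField.mulf /=.
by rewrite !numden_Ratio ?mulr1 ?oner_neq0 ?denom_ratioP // mulrC.
Qed.

Section RationalFunctions.
Variables (C : idomainType) (K : fieldType) (D : K -> K).
Variables (iota : {rmorphism ratfun C -> K}) (hext : diff_ext_of_ratfun D iota).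

Let hD : derivation D := hext.1.

Lemma derivation_ratfun_poly (p : {poly C}) :
  exists g, D (iota (FracField.tofrac p)) = iota g.
Proof.
have [_ [Dc Dx]] := hext; elim/poly_ind: p => [|p c [g Dp]].
  by exists 0; rewrite !rmorph0 derivation0.
exists (g * ratX C + FracField.tofrac p).
rewrite !(rmorphD, rmorphM) (derivationD hD) (derivationM hD) Dp Dx.
by rewrite [D (iota _)]Dc mulr1 addr0.
Qed.

Lemma derivation_ratfun (f : ratfun C) : exists g, D (iota f) = iota g.
Proof.
have [p [q [q0 ->]]] := tofrac_quotient f.
have [gp Dp] := derivation_ratfun_poly p; have [gq Dq] := derivation_ratfun_poly q.
have iq0 : iota (FracField.tofrac q) != 0 by rewrite fmorph_eq0 tofrac_eq0.
exists (gp / FracField.tofrac q - FracField.tofrac p * gq /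
        (FracField.tofrac q * FracField.tofrac q)).
rewrite rmorphM fmorphV (derivationM hD) (derivationV hD) // Dp Dq.
by rewrite rmorphB !rmorphM !fmorphV !rmorphM /=; field.
Qed.

End RationalFunctions.

Lemma schrod_solE (K : fieldType) (D : K -> K) (V m y : K) :
  schrod_sol D V m y -> D (D y) = (V - m) * y.
Proof. by rewrite /schrod_sol mulrBl => <-; ring. Qed.

Lemma schrod_sol_riccati (K : fieldType) (D : K -> K) (hD : derivation D)
    (V m Psi : K) :
  Psi != 0 -> schrod_sol D V m Psi ->
  let W := - (D Psi / Psi) in V = m + W * W - D W.
Proof.
move=> Psi0 /schrod_solE DDPsi W.
by rewrite /W (derivationN hD) (derivationM hD) (derivationV hD) // DDPsi; field.
Qed.

Section Darboux.
Variables (K : fieldType) (D : K -> K) (hD : derivation D).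
Variables (W m1 mu z : K) (Dm1 : D m1 = 0) (Dmu : D mu = 0).
Hypothesis sol : schrod_sol D (m1 + W * W + D W) mu z.

Let DDz : D (D z) = (m1 + W * W + D W - mu) * z := schrod_solE sol.

Lemma darboux_schrod_sol : schrod_sol D (m1 + W * W - D W) mu (D z - W * z).
Proof.
have DDDz : D (D (D z)) = (2%:R * W * D W + D (D W)) * z
                         + (m1 + W * W + D W - mu) * D z.
  by rewrite DDz !(derivationN hD, derivationD hD, derivationM hD) Dm1 Dmu; ring.
by rewrite /schrod_sol !(derivationN hD, derivationD hD, derivationM hD) DDDz DDz; ring.
Qed.

Lemma darboux_inverse :
  D (D z - W * z) + W * (D z - W * z) = (m1 - mu) * z.
Proof. by rewrite (derivationB hD) (derivationM hD) DDz; ring. Qed.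

End Darboux.

Lemma PV_field_darboux_sub (C : idomainType) (K : fieldType) (D : K -> K)
    (iota : ratfun C -> K) (hD : derivation D) (W m1 mu : K) (fW fm : ratfun C) :
  iota fW = W -> iota fm = m1 - mu -> m1 - mu != 0 -> D m1 = 0 -> D mu = 0 ->
  forall a, PV_field D iota (m1 + W * W + D W) mu a ->
            PV_field D iota (m1 + W * W - D W) mu a.
Proof.
move=> hW hm m0 Dm1 Dmu a PVa S hS gens; apply: PVa => // b [[f ->]|[z [sol hb]]].
  by apply: gens; left; exists f.
set y := D z - W * z.
have ysol := darboux_schrod_sol hD Dm1 Dmu sol.
have Sy : S y by apply: gens; right; exists y; split => //; left.
have SDy : S (D y) by apply: gens; right; exists y; split => //; right.
have SW : S W by apply: gens; left; exists fW.
have Sm : S (m1 - mu) by apply: gens; left; exists fm.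
have Sz : S z.
  have -> : z = (D y + W * y) / (m1 - mu).
    by rewrite (darboux_inverse hD sol) mulrC mulKf.
  by apply: (subfieldM hS) (subfieldD hS _ (subfieldM hS _ _)) (subfieldV hS _).
case: hb => -> //; rewrite -[D z](subrK (W * z)).
exact: (subfieldD hS) (subfieldM hS _ _).
Qed.

Lemma image_of_sqr_and_derivation (L K : fieldType) (D : K -> K) (hD : derivation D)
    (iota : {rmorphism L -> K}) (W : K) :
  (forall f, exists g, D (iota f) = iota g) ->
  (forall a, D a = 0 -> exists f, a = iota f) ->
  (2%:R : K) != 0 ->
  (exists s, iota s = D W) -> (exists r, iota r = W * W) ->
  exists f, iota f = W.
Proof.
move=> Dimg consts two0 [s hs] [r hr].
have [DW0 | DW0] := eqVneq (D W) 0.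
  by have [c ->] := consts W DW0; exists c.
have [r' hr'] := Dimg r.
exists (r' / (2%:R * s)).
rewrite rmorphM fmorphV rmorphM rmorph_nat hs -hr' hr (derivationM hD).
by field; rewrite two0 DW0.
Qed.

Unset Implicit Arguments. Set Strict Implicit.

Theorem corollary2p2p14 (R : realType) (K : fieldType) (D : K -> K)
    (iota : {rmorphism ratfun (R[i]) -> K})
    (hext : diff_ext_of_ratfun D iota)
    (hconst : constants_are_C D iota)
    (Vm : ratfun (R[i])) (lam1 : R[i]) (Psi1 : K)
    (hPsi1 : Psi1 != 0)
    (hsol : schrod_sol D (iota Vm) (iota (ratC lam1)) Psi1)
    (halg : algebraic_over_ratfun iota (- (D Psi1 / Psi1)))
    (hfund : forall lam : R[i], lam != lam1 ->
               has_fundamental_system D (iota Vm) (iota (ratC lam))) :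
  let W := - (D Psi1 / Psi1) in
  let Vp := iota Vm - 2%:R * D (D Psi1 / Psi1) in
  (exists f : ratfun (R[i]), iota f = W) <->
  ((exists g : ratfun (R[i]), iota g = Vp) /\
   forall lam : R[i], lam != lam1 ->
     forall a : K, PV_field D iota (iota Vm) (iota (ratC lam)) a <->
                   PV_field D iota Vp (iota (ratC lam)) a).
Proof.
move=> W Vp; have [hD [Dc _]] := hext.
set m1 := iota (ratC lam1).
have hVm : iota Vm = m1 + W * W - D W := schrod_sol_riccati hD hPsi1 hsol.
have hVp : Vp = m1 + W * W + D W.
  by rewrite /Vp -[D Psi1 / Psi1]opprK (derivationN hD) hVm; ring.
have two0 : (2%:R : K) != 0.
  by rewrite -(rmorph_nat iota) fmorph_eq0 -(rmorph_nat (@FracField.tofrac _))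
             tofrac_eq0 -polyC_natr polyC_eq0 pnatr_eq0.
split=> [[f hf] | [[g hg] _]].
  have [h hh] := derivation_ratfun hext f.
  split; first by exists (Vm + 2%:R * h);
                  rewrite rmorphD rmorphM rmorph_nat -hh hf hVm hVp; ring.
  move=> lam lam_neq a; set mu := iota (ratC lam).
  have m0 : m1 - mu != 0.
    by rewrite subr_eq0 (inj_eq (fmorph_inj iota)) tofrac_eq (inj_eq polyC_inj) eq_sym.
  have hm : iota (ratC lam1 - ratC lam) = m1 - mu by rewrite rmorphB.
  have hVmN : m1 + - W * - W + D (- W) = iota Vm by rewrite (derivationN hD) hVm; ring.
  have hVpN : m1 + - W * - W - D (- W) = Vp by rewrite (derivationN hD) hVp; ring.
  have hfN : iota (- f) = - W by rewrite rmorphN hf.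
  split.
    rewrite -hVmN -hVpN; exact: (PV_field_darboux_sub hD hfN hm m0 (Dc _) (Dc _)).
  rewrite hVp hVm; exact: (PV_field_darboux_sub hD hf hm m0 (Dc _) (Dc _)).
apply: (image_of_sqr_and_derivation hD (derivation_ratfun hext) _ two0).
- by move=> a /hconst [c ->]; exists (ratC c).
- exists ((g - Vm) / 2%:R).
  by rewrite rmorphM fmorphV rmorphB rmorph_nat hg hVp hVm; field.
- exists (Vm - ratC lam1 + (g - Vm) / 2%:R).
  rewrite !rmorphD rmorphN rmorphM fmorphV rmorphB rmorph_nat hg hVp hVm -/m1.
  by field.
Qed.
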